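(* For any fixed $0\le\lambda_1\le\lambda_2\le1$, the quantity $\Gamma_n\big((\theta^*_n)_{\lambda_1,\lambda_2}\big)$ is non-increasing in $n\ge2$.
   Context: A threshold function is a non-increasing map $\theta:[0,1]\to[0,1]$. For $0\le\lambda_1\le\lambda_2\le1$, $\theta_{\lambda_1,\lambda_2}(t)=1$ for $t\in[0,\lambda_1]$, $=\theta(t)$ for $t\in(\lambda_1,\lambda_2)$, $=0$ for $t\in[\lambda_2,1]$. $\Gamma_n(\theta)=\int_0^1\Big(\int_s^1\frac{(1-t+t\theta(s))^n-t\theta(s)^n}{t(1-t)}\,\mathrm dt-\theta(s)^n\Big)\mathrm ds$. For $s\in[0,1)$, $\theta^*_n(s)$ is the unique solution in $(0,1)$ of $\int_s^1\frac{(1-t+t\theta^*_n(s))^{n-1}-\theta^*_n(s)^{n-1}}{1-t}\,\mathrm dt=\theta^*_n(s)^{n-1}$, and $\theta^*_n(1)=0$. *)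

From HB Require Import structures.
From mathcomp Require Import all_boot all_order all_algebra.
From mathcomp Require Import all_classical all_reals all_analysis.
Set Implicit Arguments. Unset Strict Implicit. Unset Printing Implicit Defensive.
Import Order.TTheory GRing.Theory Num.Theory.
Import numFieldNormedType.Exports.
Local Open Scope classical_set_scope.
Local Open Scope ring_scope.

Section Defs.
Variable R : realType.
Local Notation mu := (@lebesgue_measure R).

Definition trunc (l1 l2 : R) (theta : R -> R) (t : R) : R :=
  if t <= l1 then 1 else if t < l2 then theta t else 0.

Definition Gamma_inner (n : nat) (th s : R) : \bar R :=
  (\int[mu]_(t in `[s, 1%R]) (((1 - t + t * th) ^+ n - t * th ^+ n)
                             / (t * (1 - t)))%:E)%E.

Definition Gamma (n : nat) (theta : R -> R) : \bar R :=
  (\int[mu]_(s in `[0%R, 1%R]) (Gamma_inner n (theta s) s - (theta s ^+ n)%:E))%E.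

Definition theta_star_eq (n : nat) (s x : R) : Prop :=
  (\int[mu]_(t in `[s, 1%R]) (((1 - t + t * x) ^+ n.-1 - x ^+ n.-1) / (1 - t))%:E
     = (x ^+ n.-1)%:E)%E.

(* theta*_n(s): the (unique) solution in (0,1) for s in [0,1); 0 at s = 1 *)
Definition theta_star (n : nat) (s : R) : R :=
  if s < 1 then xget 0 [set x | 0 < x < 1 /\ theta_star_eq n s x] else 0.

End Defs.

From mathcomp Require Import all_boot all_order all_algebra.
From mathcomp Require Import all_classical all_reals all_analysis.
From mathcomp Require Import ring lra measurable_realfun.
Import Order.TTheory GRing.Theory Num.Theory.
Import numFieldNormedType.Exports.
Local Open Scope classical_set_scope.
Local Open Scope ring_scope.

(* The theorem holds pointwise in s: writing h_k(x, s) for the integrand of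
   Gamma_k at theta(s) = x, we show h_{k+1}(theta_{k+1}(s), s) <= h_k(theta_k(s), s)
   for theta_k the truncation of theta*_k.  With the kernels
     G_k(x, t) = ((1-t+tx)^k - t x^k) / (t(1-t)),
     S_k(x, t) = ((1-t+tx)^k - x^k) / (1-t),
   one has G_k = G_{k+1} + (1-x) S_k, so h_{k+1}(x) <= h_k(x) as soon as
   int_s^1 S_k(x) >= x^k; this covers x = 0, x = 1 and x = theta*_{k+1}(s), whose
   defining equation is int_s^1 S_k = x^k.  Moreover theta*_k(s) maximises
   h_k(., s), by the tangent-line bound
     G_k(y) <= G_k(x) + (y^k - x^k) / x^(k-1) * S_{k-1}(x).
   Hence h_{k+1}(theta*_{k+1}) <= h_k(theta*_{k+1}) <= h_k(theta*_k).  The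
   equation defining theta*_k is solvable by the intermediate value theorem,
   since x |-> int_s^1 S_k(x) is a polynomial in x. *)

Section ExtendedRealArith.
Variable R : realType.
Local Open Scope ereal_scope.

Lemma lee_subB_addr (I Y : \bar R) (b c : R) : 0 <= I -> (c - b)%:E <= Y ->
  I - b%:E <= I + Y - c%:E.
Proof.
move: I Y => [r| |] [y| |] //= _; rewrite ?lee_fin; first by move=> ?; lra.
by move=> _; rewrite addey // addye // leey.
Qed.

Lemma lee_subB_of_le_addr (I J : \bar R) (a b : R) : 0 <= I ->
  I <= J + (a - b)%:E -> I - a%:E <= J - b%:E.
Proof.
move: I J => [r| |] [y| |] //= _; rewrite ?lee_fin; first by move=> ?; lra.
by move=> _; rewrite addye // leey.
Qed.

Lemma lee_subB_of_addr_le (I J : \bar R) (a b : R) : 0 <= I ->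
  I + (b - a)%:E <= J -> I - a%:E <= J - b%:E.
Proof.
move: I J => [r| |] [y| |] //= _; rewrite ?lee_fin; first by move=> ?; lra.
by move=> _; rewrite addye // leey.
Qed.

End ExtendedRealArith.

(* The library versions assume measurability; comparing the positive and the
   negative parts directly avoids it. *)
Lemma le_integral_pointwise d (T : measurableType d) (R : realType)
    (mu : {measure set T -> \bar R}) (D : set T) (f g : T -> \bar R) :
  (forall x, D x -> (f x <= g x)%E) ->
  (\int[mu]_(x in D) f x <= \int[mu]_(x in D) g x)%E.
Proof.
move=> /lee_restrict fg; rewrite /integral; apply: leeB.
  apply: ereal_sup_le => _ [h hf <-]; exists h => //= x.
  apply: le_trans (hf x) _; apply: (@funepos_le _ _ setT); last exact: in_setT.
  by move=> z _; exact: fg.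
apply: ereal_sup_le => _ [h hf <-]; exists h => //= x.
apply: le_trans (hf x) _; apply: (@funeneg_le _ _ setT); last exact: in_setT.
by move=> z _; exact: fg.
Qed.

Section GammaMonotone.
Variable R : realType.
Local Notation mu := (@lebesgue_measure R).
Implicit Types x y s t : R.

Definition Gamma_kernel n x t := ((1 - t + t * x) ^+ n - t * x ^+ n) / (t * (1 - t)).
Definition star_kernel k x t := ((1 - t + t * x) ^+ k - x ^+ k) / (1 - t).

Lemma Gamma_kernel_ge0 n x t : 0 <= x <= 1 -> 0 < t < 1 -> 0 <= Gamma_kernel n x t.
Proof.
move=> /andP[x0 x1] /andP[t0 t1]; have hmix : x <= 1 - t + t * x by nra.
apply: divr_ge0; last by nra.
rewrite subr_ge0; apply: (@le_trans _ _ (x ^+ n)).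
  by rewrite -[X in _ <= X]mul1r ler_wpM2r ?exprn_ge0 //; lra.
by apply: lerXn2r => //; rewrite nnegrE //; lra.
Qed.

Lemma star_kernel_ge0 k x t : 0 <= x <= 1 -> 0 < t < 1 -> 0 <= star_kernel k x t.
Proof.
move=> /andP[x0 x1] /andP[t0 t1]; have hmix : x <= 1 - t + t * x by nra.
apply: divr_ge0; last by lra.
by rewrite subr_ge0; apply: lerXn2r => //; rewrite nnegrE //; lra.
Qed.

Lemma Gamma_kernelS k x t : 0 < t < 1 ->
  Gamma_kernel k x t = Gamma_kernel k.+1 x t + (1 - x) * star_kernel k x t.
Proof.
case/andP=> t0 t1; rewrite /Gamma_kernel /star_kernel !exprS.
have ? : t != 0 by rewrite gt_eqF.
have ? : 1 - t != 0 by rewrite gt_eqF // subr_gt0.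
by field; apply/andP.
Qed.

(* With r = (1-t+tx)/x, each term of the factorisation of a^(n+1) - b^(n+1)
   is compared with the same term for y r and x r = 1-t+tx, using that y r and
   1-t+ty lie on the same side of 1-t+tx as y does of x. *)
Lemma mix_powS_increment_le n x y t : 0 < x <= 1 -> 0 <= y <= 1 -> 0 < t < 1 ->
  (1 - t + t * y) ^+ n.+1 - (1 - t + t * x) ^+ n.+1 <=
  t * (y ^+ n.+1 - x ^+ n.+1) * ((1 - t + t * x) ^+ n / x ^+ n).
Proof.
move=> /andP[x0 x1] /andP[y0 y1] /andP[t0 t1].
set ay := 1 - t + t * y; set ax := 1 - t + t * x; set r := ax / x.
have axr : ax = x * r by rewrite /r mulrC divfK ?gt_eqF.
have ay0 : 0 <= ay by rewrite /ay; nra.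
have ax0 : 0 <= ax by rewrite /ax; nra.
have r0 : 0 <= r by rewrite /r divr_ge0 // /ax; nra.
have yr0 : 0 <= y * r by rewrite mulr_ge0.
have yrE : y * r - ay = (1 - t) * (y - x) / x.
  by rewrite /r /ay /ax; field; rewrite gt_eqF.
have rX (i : 'I_n.+1) : r ^+ n = r ^+ (n - i) * r ^+ i.
  by rewrite -exprD subnK // -ltnS.
rewrite -expr_div_n -/r !subrXX.
have -> : ay - ax = t * (y - x) by rewrite /ay /ax; ring.
rewrite -!mulrA ler_wpM2l ?(ltW t0) // mulr_suml.
have [xy|yx] := leP x y.
  rewrite ler_wpM2l ?subr_ge0 //; apply: ler_sum => i _.
  rewrite (rX i) [n.+1.-1]/= mulrACA -!exprMn -axr ler_wpM2r ?exprn_ge0 //.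
  apply: lerXn2r; rewrite ?nnegrE //.
  rewrite -subr_ge0 yrE; apply: divr_ge0; [apply: mulr_ge0|]; lra.
rewrite ler_wnM2l ?subr_le0 ?(ltW yx) //; apply: ler_sum => i _.
rewrite (rX i) [n.+1.-1]/= mulrACA -!exprMn -axr ler_wpM2r ?exprn_ge0 //.
apply: lerXn2r; rewrite ?nnegrE //.
rewrite -subr_le0 yrE; apply: mulr_le0_ge0; [apply: mulr_ge0_le0|]; try lra.
by rewrite invr_ge0; lra.
Qed.

Lemma Gamma_kernel_tangent_le n x y t : 0 < x <= 1 -> 0 <= y <= 1 -> 0 < t < 1 ->
  Gamma_kernel n.+1 y t <=
  Gamma_kernel n.+1 x t + (y ^+ n.+1 - x ^+ n.+1) / x ^+ n * star_kernel n x t.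
Proof.
move=> hx hy ht; have := mix_powS_increment_le n x y t hx hy ht.
case/andP: hx => x0 _; case/andP: ht => t0 t1.
have ? : t != 0 by rewrite gt_eqF.
have ? : 1 - t != 0 by rewrite gt_eqF // subr_gt0.
have ? : x ^+ n != 0 by rewrite expf_neq0 // gt_eqF.
set ay := 1 - t + t * y; set ax := 1 - t + t * x => hle.
rewrite -subr_ge0.
have -> : Gamma_kernel n.+1 x t + (y ^+ n.+1 - x ^+ n.+1) / x ^+ n * star_kernel n x t
    - Gamma_kernel n.+1 y t
  = (t * (y ^+ n.+1 - x ^+ n.+1) * (ax ^+ n / x ^+ n) - (ay ^+ n.+1 - ax ^+ n.+1))
     / (t * (1 - t)).
  by rewrite /Gamma_kernel /star_kernel -/ax -/ay; field; apply/and3P.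
by apply: divr_ge0; [rewrite subr_ge0|nra].
Qed.

Definition star_coef k i x := (x ^+ (k - i.+1) * (1 - x) ^+ i.+1) *+ 'C(k, i.+1).

Lemma star_coef_ge0 k i x : 0 <= x <= 1 -> 0 <= star_coef k i x.
Proof. by case/andP=> x0 x1; rewrite mulrn_wge0 // mulr_ge0 ?exprn_ge0 //; lra. Qed.

(* Binomial expansion of (x + (1-x)(1-t))^k: S_k is a polynomial in 1-t. *)
Lemma star_kernel_expansion k x t : t < 1 ->
  star_kernel k x t = \sum_(i < k) star_coef k i x * (1 - t) ^+ i.
Proof.
move=> t1; rewrite /star_kernel.
have -> : 1 - t + t * x = x + (1 - x) * (1 - t) by ring.
rewrite exprDn big_ord_recl /= subn0 expr0 mulr1 bin0 mulr1n addrAC subrr add0r.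
rewrite mulr_suml; apply: eq_bigr => i _.
have ? : 1 - t != 0 by rewrite gt_eqF // subr_gt0.
rewrite /star_coef /bump leq0n add1n exprMn (exprSr (1 - t) i).
move: (x ^+ (k - i.+1)) ((1 - x) ^+ i.+1) ((1 - t) ^+ i) ('C(k, i.+1)) => a b c C.
have -> : a * (b * (c * (1 - t))) = (a * b * c) * (1 - t) by ring.
by rewrite -[in LHS]mulrnAl mulfK // mulrnAl.
Qed.

Lemma itvoo01 {s t} : 0 <= s -> `]s, 1[%classic t -> 0 < t < 1.
Proof. by move=> s0; rewrite /= in_itv /= => /andP[? ?]; apply/andP; split => //; lra. Qed.

Lemma measurable_poly_ratio (p q : {poly R}) (D : set R) : open D ->
  (forall t, D t -> q.[t] != 0) -> measurable_fun D (fun t => (p.[t] / q.[t])%:E).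
Proof.
move=> oD hq; apply/measurable_EFinP.
apply: open_continuous_measurable_fun => // t; rewrite inE => Dt.
apply: continuousM; first exact: continuous_horner.
by apply: continuousV; [exact: hq|exact: continuous_horner].
Qed.

Lemma measurable_Gamma_kernel n x s : 0 <= s ->
  measurable_fun `]s, 1[ (fun t => (Gamma_kernel n x t)%:E).
Proof.
move=> s0; have -> : Gamma_kernel n x = fun t =>
    ((1 - 'X + 'X * x%:P) ^+ n - 'X * (x ^+ n)%:P).[t] / ('X * (1 - 'X)).[t].
  by apply/funext => t; rewrite /Gamma_kernel !hornerE.
apply: measurable_poly_ratio; first exact: interval_open.
move=> t /(itvoo01 s0)/andP[t0 t1].
by rewrite !hornerE mulf_neq0 // gt_eqF // subr_gt0.
Qed.

Lemma measurable_star_kernel k x s : 0 <= s ->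
  measurable_fun `]s, 1[ (fun t => (star_kernel k x t)%:E).
Proof.
move=> s0; have -> : star_kernel k x = fun t =>
    ((1 - 'X + 'X * x%:P) ^+ k - (x ^+ k)%:P).[t] / (1 - 'X).[t].
  by apply/funext => t; rewrite /star_kernel !hornerE.
apply: measurable_poly_ratio; first exact: interval_open.
by move=> t /(itvoo01 s0)/andP[_ t1]; rewrite !hornerE gt_eqF // subr_gt0.
Qed.

Lemma measurable_powB1 i s : measurable_fun `]s, 1[ (fun t => ((1 - t) ^+ i)%:E).
Proof.
apply/measurable_EFinP; apply: measurable_funX.
by apply: measurable_funB; [exact: measurable_cst|exact: measurable_id].
Qed.

Lemma Gamma_inner_itvoo n x s : 0 <= s ->
  Gamma_inner n x s = (\int[mu]_(t in `]s, 1%R[) (Gamma_kernel n x t)%:E)%E.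
Proof.
move=> s0; rewrite /Gamma_inner (@integral_itv_bndoo _ s 1 _ true false) //.
exact: measurable_Gamma_kernel.
Qed.

Lemma theta_star_eq_itvoo n x s : 0 <= s ->
  theta_star_eq n s x <->
  (\int[mu]_(t in `]s, 1%R[) (star_kernel n.-1 x t)%:E)%E = (x ^+ n.-1)%:E.
Proof.
move=> s0; rewrite /theta_star_eq (@integral_itv_bndoo _ s 1 _ true false) //.
exact: measurable_star_kernel.
Qed.

Lemma integral_Gamma_kernel_ge0 n x s : 0 <= s -> 0 <= x <= 1 ->
  (0 <= \int[mu]_(t in `]s, 1%R[) (Gamma_kernel n x t)%:E)%E.
Proof.
move=> s0 hx; apply: integral_ge0 => t /(itvoo01 s0) ht.
by rewrite lee_fin Gamma_kernel_ge0.
Qed.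

Lemma integral_star_kernel_ge0 k x s : 0 <= s -> 0 <= x <= 1 ->
  (0 <= \int[mu]_(t in `]s, 1%R[) (star_kernel k x t)%:E)%E.
Proof.
move=> s0 hx; apply: integral_ge0 => t /(itvoo01 s0) ht.
by rewrite lee_fin star_kernel_ge0.
Qed.

Definition Gamma_integrand n x s : \bar R := (Gamma_inner n x s - (x ^+ n)%:E)%E.

Lemma Gamma_integrandS_le k x s : 0 <= s -> 0 <= x <= 1 ->
  (((1 - x) * x ^+ k)%:E <=
   (1 - x)%:E * \int[mu]_(t in `]s, 1%R[) (star_kernel k x t)%:E)%E ->
  (Gamma_integrand k.+1 x s <= Gamma_integrand k x s)%E.
Proof.
move=> s0 hx hS; rewrite /Gamma_integrand !Gamma_inner_itvoo //.
have x1 : 0 <= 1 - x by case/andP: hx => ? ?; lra.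
have hS0 t : `]s, 1[%classic t -> (0 <= (star_kernel k x t)%:E)%E.
  by move=> /(itvoo01 s0) ht; rewrite lee_fin star_kernel_ge0.
have -> : (\int[mu]_(t in `]s, 1%R[) (Gamma_kernel k x t)%:E =
    \int[mu]_(t in `]s, 1%R[) (Gamma_kernel k.+1 x t)%:E +
    (1 - x)%:E * \int[mu]_(t in `]s, 1%R[) (star_kernel k x t)%:E)%E.
  rewrite -ge0_integralZl_EFin //; last exact: measurable_star_kernel.
  rewrite -ge0_integralD //.
  - apply: eq_integral => t; rewrite inE => /(itvoo01 s0) ht.
    by rewrite (Gamma_kernelS k x t ht) EFinD EFinM.
  - by move=> t /(itvoo01 s0) ht; rewrite lee_fin Gamma_kernel_ge0.
  - exact: measurable_Gamma_kernel.
  - by move=> t /hS0; rewrite -EFinM !lee_fin => ?; rewrite mulr_ge0.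
  - by apply: measurable_funeM; exact: measurable_star_kernel.
apply: lee_subB_addr; first exact: integral_Gamma_kernel_ge0.
by rewrite (_ : x ^+ k - x ^+ k.+1 = (1 - x) * x ^+ k) // exprS; ring.
Qed.

(* The case split on the sign of c keeps every integrand nonnegative, as the
   integrals may be +oo. *)
Lemma integral_subB_le_of_tangent (D : set R) (f g h : R -> R) (c H a b : R) :
  measurable D ->
  measurable_fun D (EFin \o f) -> measurable_fun D (EFin \o g) ->
  measurable_fun D (EFin \o h) ->
  (forall t, D t -> 0 <= f t /\ 0 <= g t /\ 0 <= h t) ->
  (forall t, D t -> f t <= g t + c * h t) ->
  (\int[mu]_(t in D) (h t)%:E)%E = H%:E -> c * H = a - b ->
  (\int[mu]_(t in D) (f t)%:E - a%:E <= \int[mu]_(t in D) (g t)%:E - b%:E)%E.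
Proof.
move=> mD mf mg mh fgh0 fgh hH cH.
have f0 t : D t -> 0 <= f t by move=> Dt; case: (fgh0 t Dt).
have g0 t : D t -> 0 <= g t by move=> Dt; case: (fgh0 t Dt) => _ [].
have h0 t : D t -> 0 <= h t by move=> Dt; case: (fgh0 t Dt) => _ [].
have EFin_ge0 (u : R -> R) : (forall t, D t -> 0 <= u t) ->
    forall t, D t -> (0 <= (u t)%:E)%E.
  by move=> u0 t Dt; rewrite lee_fin u0.
have intD e u : 0 <= e -> (forall t, D t -> 0 <= u t) -> measurable_fun D (EFin \o u) ->
    (\int[mu]_(t in D) ((u t)%:E + e%:E * (h t)%:E) =
     \int[mu]_(t in D) (u t)%:E + (e * H)%:E)%E.
  move=> e0 u0 mu_meas; have u0e := EFin_ge0 _ u0; have h0e := EFin_ge0 _ h0.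
  have he0 t : D t -> (0 <= e%:E * (h t)%:E)%E.
    by move=> Dt; rewrite -EFinM lee_fin mulr_ge0 ?h0.
  have mhe : measurable_fun D (fun t => (e%:E * (h t)%:E)%E).
    exact: measurable_funeM.
  by rewrite ge0_integralD // ge0_integralZl_EFin // hH.
have intf0 : (0 <= \int[mu]_(t in D) (f t)%:E)%E by exact/integral_ge0/EFin_ge0.
have [c0|c0] := leP 0 c.
- apply: lee_subB_of_le_addr => //.
  rewrite -cH -(intD c g c0 g0 mg); apply: ge0_le_integral => //.
  by apply: emeasurable_funD => //; exact: measurable_funeM.
- apply: lee_subB_of_addr_le => //.
  have c0' : 0 <= - c by rewrite oppr_ge0 ltW.
  rewrite -opprB -cH -mulNr -(intD (- c) f c0' f0 mf); apply: ge0_le_integral => //.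
  + by move=> t Dt; rewrite -EFinM -EFinD lee_fin addr_ge0 ?mulr_ge0 ?f0 ?h0.
  + by apply: emeasurable_funD => //; exact: measurable_funeM.
  + by move=> t Dt; rewrite -EFinM -EFinD lee_fin mulNr; have := fgh t Dt; lra.
Qed.

Lemma Gamma_integrand_le_of_star_eq n x y s : 0 <= s -> 0 < x <= 1 -> 0 <= y <= 1 ->
  (\int[mu]_(t in `]s, 1%R[) (star_kernel n x t)%:E)%E = (x ^+ n)%:E ->
  (Gamma_integrand n.+1 y s <= Gamma_integrand n.+1 x s)%E.
Proof.
move=> s0 hx hy hS; rewrite /Gamma_integrand !Gamma_inner_itvoo //.
have hx' : 0 <= x <= 1 by case/andP: hx => ? ->; rewrite andbT ltW.
have xn0 : x ^+ n != 0 by rewrite expf_neq0 // gt_eqF //; case/andP: hx.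
apply: (@integral_subB_le_of_tangent _ (Gamma_kernel n.+1 y) (Gamma_kernel n.+1 x)
  (star_kernel n x) ((y ^+ n.+1 - x ^+ n.+1) / x ^+ n)).
- exact: measurable_itv.
- exact: measurable_Gamma_kernel.
- exact: measurable_Gamma_kernel.
- exact: measurable_star_kernel.
- by move=> t /(itvoo01 s0) ht; rewrite !Gamma_kernel_ge0 ?star_kernel_ge0.
- by move=> t /(itvoo01 s0); exact: Gamma_kernel_tangent_le.
- exact: hS.
- by rewrite divfK.
Qed.

Definition moment s i := fine (\int[mu]_(t in `]s, 1%R[) ((1 - t) ^+ i)%:E)%E.

Lemma momentE s i : 0 <= s ->
  (\int[mu]_(t in `]s, 1%R[) ((1 - t) ^+ i)%:E)%E = (moment s i)%:E.
Proof.
move=> s0; have hpow t : `]s, 1[%classic t -> 0 <= 1 - t <= 1.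
  by rewrite /= in_itv /= => /andP[st t1]; apply/andP; split; lra.
rewrite /moment fineK // ge0_fin_numE; last first.
  by apply: integral_ge0 => t /hpow/andP[? _]; rewrite lee_fin exprn_ge0.
apply: (@le_lt_trans _ _ (\int[mu]_(t in `]s, 1%R[) (cst 1%:E) t)%E).
  apply: ge0_le_integral => //.
  - by move=> t /hpow/andP[? _]; rewrite lee_fin exprn_ge0.
  - exact: measurable_powB1.
  - by move=> t /hpow/andP[? ?]; rewrite lee_fin exprn_ile1.
rewrite integral_cst //= mul1e lebesgue_measure_itv /=.
by case: ifP => _; rewrite ?ltey.
Qed.

(* (1 - t)^i >= ((1 - s)/2)^i on the left half of ]s, 1[. *)
Lemma moment_gt0 s i : 0 <= s < 1 -> 0 < moment s i.
Proof.
move=> /andP[s0 s1]; rewrite -lte_fin -momentE //.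
set d := (1 - s) / 2; set m := s + d.
have d0 : 0 < d by rewrite /d; lra.
have sm : s < m by rewrite /m; lra.
apply: (@lt_le_trans _ _
  (\int[mu]_(t in `]s, 1%R[) ((d ^+ i)%:E * (\1_(`]s, m[) t)%:E))%E).
  have mind : measurable_fun `]s, 1[ (fun t => (\1_(`]s, m[) t : R)%:E).
    by apply/measurable_EFinP; apply: measurable_indic; exact: measurable_itv.
  rewrite ge0_integralZl_EFin ?exprn_ge0 ?(ltW d0) // integral_indic //.
  rewrite setIidl; last first.
    by move=> t; rewrite /= !in_itv /= /m /d => /andP[-> ?]; lra.
  have := @lebesgue_measure_itv R `]s, m[; rewrite /= lte_fin sm -EFinB => ->.
  by rewrite -EFinM lte_fin mulr_gt0 ?exprn_gt0 // subr_gt0.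
apply: ge0_le_integral => //.
- by move=> t _; rewrite -EFinM lee_fin mulr_ge0 ?exprn_ge0 ?(ltW d0).
- apply: measurable_funeM; apply/measurable_EFinP; apply: measurable_indic.
  exact: measurable_itv.
- exact: measurable_powB1.
- move=> t; rewrite /= in_itv /= => /andP[st t1].
  rewrite -EFinM lee_fin indicE.
  case: (boolP (t \in `]s, m[%classic)) => htm.
    rewrite mulr1; apply: lerXn2r; rewrite ?nnegrE; try lra.
    by move: htm; rewrite inE /= in_itv /= /m /d => /andP[_ ?]; lra.
  by rewrite mulr0 exprn_ge0 //; lra.
Qed.

Definition star_poly k s : {poly R} :=
  \sum_(i < k) (('X ^+ (k - i.+1) * (1 - 'X) ^+ i.+1) *+ 'C(k, i.+1)) * (moment s i)%:P.

Lemma integral_star_kernel k s x : 0 <= s -> 0 <= x <= 1 ->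
  (\int[mu]_(t in `]s, 1%R[) (star_kernel k x t)%:E)%E = ((star_poly k s).[x])%:E.
Proof.
move=> s0 hx; rewrite /star_poly horner_sum -sumEFin.
transitivity (\int[mu]_(t in `]s, 1%R[)
    (\sum_(i < k) (star_coef k i x)%:E * ((1 - t) ^+ i)%:E))%E.
  apply: eq_integral => t; rewrite inE /= in_itv /= => /andP[_ t1].
  by rewrite star_kernel_expansion // -sumEFin; apply: eq_bigr => i _; rewrite EFinM.
have hpow i t : `]s, 1[%classic t -> 0 <= (1 - t) ^+ i.
  by rewrite /= in_itv /= => /andP[_ t1]; rewrite exprn_ge0 //; lra.
rewrite ge0_integral_sum //.
- apply: eq_bigr => i _.
  rewrite ge0_integralZl_EFin ?momentE ?star_coef_ge0 //; last exact: measurable_powB1.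
    by rewrite /star_coef !hornerE hornerMn !hornerE EFinM.
  by move=> t /(hpow i); rewrite lee_fin.
- by move=> i; apply: measurable_funeM; exact: measurable_powB1.
- by move=> i t /(hpow i) ?; rewrite -EFinM lee_fin mulr_ge0 ?star_coef_ge0.
Qed.

Lemma theta_star_eq_solvable n s : (2 <= n)%N -> 0 <= s < 1 ->
  exists x, 0 < x < 1 /\ theta_star_eq n s x.
Proof.
move=> n2 /andP[s0 s1].
have k0 : (0 < n.-1)%N by rewrite -ltnS prednK // ltnW.
set k := n.-1 in k0 *.
pose G x := (star_poly k s).[x] - x ^+ k.
have G0 : 0 < G 0.
  rewrite /G expr0n eqn0Ngt k0 subr0 -lte_fin -integral_star_kernel ?lexx ?ler01 //.
  have -> : (\int[mu]_(t in `]s, 1%R[) (star_kernel k 0 t)%:E =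
      \int[mu]_(t in `]s, 1%R[) ((1 - t) ^+ k.-1)%:E)%E.
    apply: eq_integral => t; rewrite inE /= in_itv /= => /andP[_ t1].
    rewrite /star_kernel mulr0 addr0 expr0n eqn0Ngt k0 subr0.
    by rewrite -[in (1 - t) ^+ k](prednK k0) exprSr mulfK // gt_eqF // subr_gt0.
  by rewrite momentE // lte_fin moment_gt0 // s0 s1.
have G1 : G 1 = -1.
  have := integral_star_kernel k s 1 s0; rewrite lexx ler01 => /(_ isT).
  rewrite (eq_integral (fun=> 0%E)) ?integral0 => [[P1]|t _].
    by rewrite /G -P1 expr1n sub0r.
  by rewrite /star_kernel mulr1 subrK expr1n subrr mul0r.
have [c] : exists2 c, c \in `[0, 1] & G c = 0.
  apply: IVT; first exact: ler01.
    apply: continuous_subspaceT => x; apply: continuousB.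
      exact: continuous_horner.
    exact: exprn_continuous.
  by rewrite G1 ge_min le_max; apply/andP; split; apply/orP; [right|left]; lra.
rewrite in_itv /= => /andP[c0 c1] Gc.
have c_neq0 : c != 0 by apply/eqP => c_eq0; move: Gc; rewrite c_eq0; lra.
have c_neq1 : c != 1 by apply/eqP => c_eq1; move: Gc; rewrite c_eq1 G1; lra.
exists c; split; first by rewrite !lt_def c_neq0 c0 eq_sym c_neq1 c1.
apply/theta_star_eq_itvoo => //; rewrite -/k integral_star_kernel ?c0 ?c1 //.
by congr EFin; apply/eqP; rewrite -subr_eq0 -/(G c) Gc.
Qed.

Lemma theta_starP n s : (2 <= n)%N -> 0 <= s < 1 ->
  0 < theta_star n s < 1 /\ theta_star_eq n s (theta_star n s).
Proof.
move=> n2 hs; rewrite /theta_star (andP hs).2.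
exact: (xgetPex 0 (theta_star_eq_solvable n s n2 hs)).
Qed.

Lemma Gamma_integrand_truncS_le (l1 l2 : R) k s : l2 <= 1 -> (2 <= k)%N -> 0 <= s <= 1 ->
  (Gamma_integrand k.+1 (trunc l1 l2 (theta_star k.+1) s) s <=
   Gamma_integrand k (trunc l1 l2 (theta_star k) s) s)%E.
Proof.
move=> l21 k2 /andP[s0 s1]; rewrite /trunc.
case: ifP => _.
  apply: Gamma_integrandS_le => //; first by rewrite ler01 lexx.
  by rewrite subrr mul0r mul0e.
case: ifP => sl2; last first.
  apply: Gamma_integrandS_le => //; first by rewrite lexx ler01.
  rewrite subr0 mul1r mul1e expr0n; case: k k2 => // k _ /=.
  by apply: integral_star_kernel_ge0 => //; rewrite lexx ler01.
have hs : 0 <= s < 1 by rewrite s0 (lt_le_trans sl2 l21).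
have [/andP[x1_0 x1_1] E1] := theta_starP k.+1 s (leqW k2) hs.
have [/andP[x0_0 x0_1] E0] := theta_starP k s k2 hs.
set x1 := theta_star k.+1 s in x1_0 x1_1 E1 *.
set x0 := theta_star k s in x0_0 x0_1 E0 *.
move/(theta_star_eq_itvoo _ _ _ s0): E1 => /= E1.
move/(theta_star_eq_itvoo _ _ _ s0): E0 => E0.
apply: (@le_trans _ _ (Gamma_integrand k x1 s)).
  by apply: Gamma_integrandS_le; rewrite // ?E1 -?EFinM // !ltW.
rewrite -(prednK (ltnW k2)) in E0 *.
by apply: Gamma_integrand_le_of_star_eq; rewrite // ?x0_0 !ltW.
Qed.

Lemma Gamma_truncS_le (l1 l2 : R) k : l2 <= 1 -> (2 <= k)%N ->
  (Gamma k.+1 (trunc l1 l2 (theta_star k.+1)) <= Gamma k (trunc l1 l2 (theta_star k)))%E.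
Proof.
move=> l21 k2; apply: le_integral_pointwise => s; rewrite /= in_itv /=.
exact: Gamma_integrand_truncS_le.
Qed.

End GammaMonotone.

Theorem mainTheorem15 (R : realType) (l1 l2 : R)
  (h0 : 0 <= l1) (h12 : l1 <= l2) (h1 : l2 <= 1) (n m : nat)
  (hn : (2 <= n)%N) (hnm : (n <= m)%N) :
  (Gamma m (trunc l1 l2 (theta_star m)) <=
   Gamma n (trunc l1 l2 (theta_star n)))%E.
Proof.
elim: m hnm => [|m IH]; first by rewrite leqn0 => /eqP->.
rewrite leq_eqVlt ltnS => /predU1P[-> //|hnm].
exact: le_trans (Gamma_truncS_le _ l1 l2 m h1 (leq_trans hn hnm)) (IH hnm).
Qed.
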